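(* For every $f>0$, the minimum possible root-mean-square size of a planar configuration with cohesion $f$ is $$\min\{b(\mathbf r):\ \mathbf r\in\mathfrak R,\ f(\mathbf r)=f\}=\frac{C(\mathbf m)}{f\sqrt{\sum_j m_j}},$$ and this minimum is achieved on every trajectory $\mathbf r_\lambda(t)$ ($\lambda>0$, generated by any minimizer of $f+\lambda g$), i.e. $b(\mathbf r_\lambda(t))=\frac{C(\mathbf m)}{f(\mathbf r_\lambda(t))\sqrt{\sum_j m_j}}$ for all $t\ge0$.
   Context: Fix $N\ge 2$, masses $\mathbf m=(m_1,\dots,m_N)$, $m_i>0$, and $\gamma>0$. Planar configuration space $\mathfrak R=\{\mathbf r=(\mathbf r_1,\dots,\mathbf r_N)\in(\mathbb R^2)^N:\ \mathbf r_i\neq\mathbf r_j \text{ for } i\neq j\}$; cohesion $f(\mathbf r)=\sum_{i<j}\frac{\gamma m_im_j}{|\mathbf r_j-\mathbf r_i|}$; $g(\mathbf r)=\sum_i m_i|\mathbf r_i|^2$; root-mean-square size $b(\mathbf r)=\sqrt{\sum_i\beta_i|\mathbf r_i|^2}$ with $\beta_i=m_i/\sum_j m_j$ (so $g=b^2\sum_jm_j$). Let $C(\mathbf m)=\min\{f(\mathbf r):\mathbf r\in\mathfrak R,\ g(\mathbf r)=1\}$. For $\lambda>0$ and a minimizer $\mathbf r_\lambda=(\mathbf r_{1\lambda},\dots,\mathbf r_{N\lambda})$ of $f+\lambda g$ on $\mathfrak R$, with $\mathbf r_{i\lambda}=|\mathbf r_{i\lambda}|(\cos\varphi_{i\lambda},\sin\varphi_{i\lambda})$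 and $\omega=\sqrt{2\lambda}$, the trajectory $\mathbf r_\lambda(t)$ has components $\mathbf r_{i\lambda}(t)=|\mathbf r_{i\lambda}|(\cos(\varphi_{i\lambda}+\omega t),\sin(\varphi_{i\lambda}+\omega t))$, $t\ge0$. *)

From HB Require Import structures.
From mathcomp Require Import all_boot all_order all_algebra.
From mathcomp Require Import all_classical all_reals all_analysis.
Set Implicit Arguments. Unset Strict Implicit. Unset Printing Implicit Defensive.
Import Order.TTheory GRing.Theory Num.Theory.
Local Open Scope ring_scope.

Section Defs.
Variable R : realType.
Variable N : nat.

Definition normp (p : R * R) : R := Num.sqrt (p.1 ^+ 2 + p.2 ^+ 2).
Definition distp (p q : R * R) : R := normp (q.1 - p.1, q.2 - p.2).

Definition in_config (r : 'I_N -> R * R) : Prop :=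
  forall i j : 'I_N, i != j -> r i <> r j.

Definition cohesion (gamma : R) (m : 'I_N -> R) (r : 'I_N -> R * R) : R :=
  \sum_(i < N) \sum_(j < N | (i < j)%N) gamma * m i * m j / distp (r i) (r j).

Definition gmom (m : 'I_N -> R) (r : 'I_N -> R * R) : R :=
  \sum_(i < N) m i * normp (r i) ^+ 2.

Definition total_mass (m : 'I_N -> R) : R := \sum_(i < N) m i.

Definition rms_size (m : 'I_N -> R) (r : 'I_N -> R * R) : R :=
  Num.sqrt (\sum_(i < N) (m i / total_mass m) * normp (r i) ^+ 2).

Definition is_min (S : R -> Prop) (x : R) : Prop :=
  S x /\ forall y, S y -> x <= y.

Definition is_minimizer (gamma : R) (m : 'I_N -> R) (lam : R)
    (rl : 'I_N -> R * R) : Prop :=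
  in_config rl /\
  forall s, in_config s ->
    cohesion gamma m rl + lam * gmom m rl <= cohesion gamma m s + lam * gmom m s.

Definition polar_angles (r : 'I_N -> R * R) (phi : 'I_N -> R) : Prop :=
  forall i, r i = (normp (r i) * cos (phi i), normp (r i) * sin (phi i)).

Definition traj (r : 'I_N -> R * R) (phi : 'I_N -> R) (omega t : R)
    : 'I_N -> R * R :=
  fun i => (normp (r i) * cos (phi i + omega * t),
            normp (r i) * sin (phi i + omega * t)).
End Defs.

From HB Require Import structures.
From mathcomp Require Import all_boot all_order all_algebra.
From mathcomp Require Import all_classical all_reals all_analysis.
From mathcomp Require Import ring.
Import Order.TTheory GRing.Theory Num.Theory.
Import numFieldNormedType.Exports.
Set Implicit Arguments. Unset Strict Implicit.
Local Open Scope ring_scope.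

(* f and g are homogeneous under dilations r -> k r, of degrees -1 and 2, so
   f * sqrt g is dilation invariant and its infimum over all configurations is
   C(m), the minimum of f on the sphere g = 1.  That minimum is attained: on the
   sphere, the sublevel set {f <= f(r0)} keeps every pair i < j at distance at
   least gamma m_i m_j / f(r0), so it is compact and free of collisions, and f is
   continuous there.  As b = sqrt (g / sum m), this gives
   b >= C(m) / (f sqrt (sum m)), with equality at dilations of a sphere minimizer.
   A minimizer of f + lambda g does no worse than the dilation of a sphere
   minimizer having the same g, hence it also realizes f sqrt g = C(m); rigid
   rotations preserve f and b, so equality holds along the whole trajectory. *)

Section PlaneGeometry.
Variable R : realType.
Implicit Types (p q : R * R) (a b k x y t : R).

Lemma normp_ge0 p : 0 <= normp p.
Proof. exact: sqrtr_ge0. Qed.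

Lemma sqr_normp p : normp p ^+ 2 = p.1 ^+ 2 + p.2 ^+ 2.
Proof. by rewrite /normp sqr_sqrtr // addr_ge0 ?sqr_ge0. Qed.

Lemma normp_eq0 p : normp p = 0 -> p = (0, 0).
Proof.
move=> p0; have /eqP : p.1 ^+ 2 + p.2 ^+ 2 = 0 by rewrite -sqr_normp p0 expr0n.
rewrite paddr_eq0 ?sqr_ge0 // !sqrf_eq0 => /andP[/eqP p1 /eqP p2].
by rewrite [p]surjective_pairing p1 p2.
Qed.

Lemma norm_fst_le_normp p : `|p.1| <= normp p.
Proof. by rewrite -sqrtr_sqr ler_wsqrtr // lerDl sqr_ge0. Qed.

Lemma norm_snd_le_normp p : `|p.2| <= normp p.
Proof. by rewrite -sqrtr_sqr ler_wsqrtr // lerDr sqr_ge0. Qed.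

Lemma normpZ k p : 0 <= k -> normp (k * p.1, k * p.2) = k * normp p.
Proof.
move=> k_ge0; rewrite /normp /= !exprMn -mulrDr sqrtrM ?sqr_ge0 //.
by rewrite sqrtr_sqr ger0_norm.
Qed.

Lemma normp_polar a x : 0 <= a -> normp (a * cos x, a * sin x) = a.
Proof.
by move=> a_ge0; rewrite (normpZ (cos x, sin x)) // /normp cos2Dsin2 sqrtr1 mulr1.
Qed.

Lemma distpp p : distp p p = 0.
Proof. by rewrite /distp /normp !subrr expr0n addr0 sqrtr0. Qed.

Lemma distp_gt0 p q : p <> q -> 0 < distp p q.
Proof.
move=> pq; rewrite lt_neqAle normp_ge0 andbT eq_sym.
apply/eqP => /normp_eq0 [/eqP + /eqP]; rewrite !subr_eq0 => /eqP q1 /eqP q2.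
by apply: pq; rewrite [p]surjective_pairing [q]surjective_pairing q1 q2.
Qed.

Lemma distp_polarD a b x y t :
  distp (a * cos (x + t), a * sin (x + t)) (b * cos (y + t), b * sin (y + t)) =
  distp (a * cos x, a * sin x) (b * cos y, b * sin y).
Proof.
rewrite /distp /normp /=; congr Num.sqrt.
set u := b * cos y - a * cos x; set v := b * sin y - a * sin x.
have -> : b * cos (y + t) - a * cos (x + t) = cos t * u - sin t * v.
  by rewrite /u /v !cosD; ring.
have -> : b * sin (y + t) - a * sin (x + t) = sin t * u + cos t * v.
  by rewrite /u /v !sinD; ring.
transitivity ((cos t ^+ 2 + sin t ^+ 2) * (u ^+ 2 + v ^+ 2)); first ring.
by rewrite cos2Dsin2 mul1r.
Qed.

End PlaneGeometry.

Section Configurations.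
Variables (R : realType) (N : nat) (m : 'I_N -> R) (gamma : R).
Hypotheses (m_gt0 : forall i, 0 < m i) (gamma_gt0 : 0 < gamma).
Implicit Types (r : 'I_N -> R * R) (k : R).

Definition pair_cohesion r (i j : 'I_N) : R :=
  gamma * m i * m j / distp (r i) (r j).

Lemma pair_cohesion_ge0 r i j : 0 <= pair_cohesion r i j.
Proof. by rewrite divr_ge0 ?normp_ge0 // !mulr_ge0 // ltW. Qed.

Lemma pair_cohesion_le r (i j : 'I_N) :
  (i < j)%N -> pair_cohesion r i j <= cohesion gamma m r.
Proof.
move=> ij; rewrite /cohesion (bigD1 i) //= (bigD1 j) //= -addrA lerDl.
rewrite addr_ge0 ?sumr_ge0 // => k _; first exact: pair_cohesion_ge0.
by rewrite sumr_ge0 // => l _; exact: pair_cohesion_ge0.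
Qed.

Lemma mass_normp_le_gmom r i : m i * normp (r i) ^+ 2 <= gmom m r.
Proof.
rewrite /gmom (bigD1 i) //= lerDl sumr_ge0 // => k _.
by rewrite mulr_ge0 ?sqr_ge0 // ltW.
Qed.

Lemma normp_le_gmom r i : normp (r i) <= Num.sqrt (gmom m r / m i).
Proof.
rewrite -(ger0_norm (normp_ge0 (r i))) -sqrtr_sqr ler_wsqrtr // ler_pdivlMr //.
by rewrite mulrC mass_normp_le_gmom.
Qed.

Lemma gmom_ge0 r : 0 <= gmom m r.
Proof. by rewrite sumr_ge0 // => i _; rewrite mulr_ge0 ?sqr_ge0 // ltW. Qed.

Definition scale k r : 'I_N -> R * R := fun i => (k * (r i).1, k * (r i).2).

Lemma in_config_scale k r : k != 0 -> in_config r -> in_config (scale k r).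
Proof.
move=> k0 r_config i j ij [e1 e2]; apply: (r_config i j ij).
by rewrite [r i]surjective_pairing [r j]surjective_pairing (mulfI k0 e1) (mulfI k0 e2).
Qed.

Lemma cohesion_scale k r : 0 < k -> cohesion gamma m (scale k r) = cohesion gamma m r / k.
Proof.
move=> k_gt0; rewrite /cohesion mulr_suml; apply: eq_bigr => i _.
rewrite mulr_suml; apply: eq_bigr => j _.
by rewrite /distp /scale /= -!mulrBr (normpZ (_, _)) ?ltW // invfM; ring.
Qed.

Lemma gmom_scale k r : 0 <= k -> gmom m (scale k r) = k ^+ 2 * gmom m r.
Proof.
move=> k_ge0; rewrite /gmom mulr_sumr; apply: eq_bigr => i _.
by rewrite /scale normpZ //; ring.
Qed.

Lemma gmom_normalize r :
  0 < gmom m r -> gmom m (scale (Num.sqrt (gmom m r))^-1 r) = 1.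
Proof.
move=> g_gt0; rewrite gmom_scale ?invr_ge0 ?sqrtr_ge0 // exprVn sqr_sqrtr ?ltW //.
by rewrite mulVf ?gt_eqF.
Qed.

Lemma rms_sizeE r :
  0 < total_mass m -> rms_size m r = Num.sqrt (gmom m r) / Num.sqrt (total_mass m).
Proof.
move=> M_gt0; rewrite /rms_size -sqrtrV ?ltW // -sqrtrM ?gmom_ge0 //.
by congr Num.sqrt; rewrite /gmom mulr_suml; apply: eq_bigr => i _; ring.
Qed.

Lemma rms_size_traj r phi w t : rms_size m (traj r phi w t) = rms_size m r.
Proof.
by congr Num.sqrt; apply: eq_bigr => i _; rewrite /traj normp_polar ?normp_ge0.
Qed.

Lemma cohesion_traj r phi w t :
  polar_angles r phi -> cohesion gamma m (traj r phi w t) = cohesion gamma m r.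
Proof.
move=> r_polar; apply: eq_bigr => i _; apply: eq_bigr => j _.
by rewrite /traj distp_polarD -r_polar -r_polar.
Qed.

Hypothesis N_ge2 : (2 <= N)%N.
Let i0 : 'I_N := Ordinal (ltn_trans (ltnSn 0) N_ge2).
Let i1 : 'I_N := Ordinal N_ge2.

Lemma total_mass_gt0 : 0 < total_mass m.
Proof.
rewrite /total_mass (bigD1 i0) //= ltr_pwDl ?m_gt0 // sumr_ge0 // => i _.
exact: ltW.
Qed.

Lemma gmom_gt0 r : in_config r -> 0 < gmom m r.
Proof.
move=> r_config; have [i ri0] : exists i, r i <> (0, 0).
  case: (pselect (r i0 = (0, 0))) => r0; last by exists i0.
  by exists i1 => r1; apply: (r_config i0 i1) => //; rewrite r0 r1.
apply: lt_le_trans (mass_normp_le_gmom r i); rewrite mulr_gt0 ?m_gt0 //.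
by rewrite exprn_gt0 // lt_neqAle normp_ge0 andbT eq_sym; apply/eqP => /normp_eq0.
Qed.

Lemma cohesion_gt0 r : in_config r -> 0 < cohesion gamma m r.
Proof.
move=> r_config; apply: lt_le_trans (@pair_cohesion_le r i0 i1 _) => //.
by rewrite divr_gt0 ?mulr_gt0 ?m_gt0 // distp_gt0 //; exact: r_config.
Qed.

End Configurations.

Section SphereMinimizer.
Local Open Scope classical_set_scope.
Import ArrowAsProduct.
Variables (R : realType) (N : nat) (m : 'I_N -> R) (gamma : R).
Hypotheses (m_gt0 : forall i, 0 < m i) (gamma_gt0 : 0 < gamma) (N_ge2 : (2 <= N)%N).
Implicit Types (r : 'I_N -> R * R).

Lemma sqr_continuous_at (T : topologicalType) (u : T -> R) (x : T) :
  {for x, continuous u} -> {for x, continuous (fun z => u z ^+ 2)}.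
Proof. by move=> u_cont; exact: continuous_comp u_cont (@exprn_continuous R 2 _). Qed.

Lemma normp_continuous_at (T : topologicalType) (u v : T -> R) (x : T) :
  {for x, continuous u} -> {for x, continuous v} ->
  {for x, continuous (fun z => normp (u z, v z))}.
Proof.
move=> u_cont v_cont; apply: continuous_comp (@sqrt_continuous R _) => /=.
by apply: continuousD; exact: sqr_continuous_at.
Qed.

Lemma sum_continuous_at (T : topologicalType) (I : Type) (s : seq I) (P : pred I)
    (F : I -> T -> R) (x : T) :
  (forall i, P i -> {for x, continuous (F i)}) ->
  {for x, continuous (fun z => \sum_(i <- s | P i) F i z)}.
Proof. by move=> F_cont; apply: cvg_big => //; exact: add_continuous. Qed.

Lemma config_fst_continuous i : continuous (fun r : 'I_N -> R * R => (r i).1).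
Proof.
move=> r; apply: (@continuous_comp _ _ _ (fun r : 'I_N -> R * R => r i) fst).
  exact: (@proj_continuous 'I_N (fun=> (R * R)%type)).
exact: cvg_fst.
Qed.

Lemma config_snd_continuous i : continuous (fun r : 'I_N -> R * R => (r i).2).
Proof.
move=> r; apply: (@continuous_comp _ _ _ (fun r : 'I_N -> R * R => r i) snd).
  exact: (@proj_continuous 'I_N (fun=> (R * R)%type)).
exact: cvg_snd.
Qed.

Lemma distp_config_continuous i j :
  continuous (fun r : 'I_N -> R * R => distp (r i) (r j)).
Proof.
move=> r; apply: (@normp_continuous_at _
  (fun r => (r j).1 - (r i).1) (fun r => (r j).2 - (r i).2));
  by apply: continuousB; apply: config_fst_continuous || apply: config_snd_continuous.
Qed.

Lemma normp_config_continuous i :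
  continuous (fun r : 'I_N -> R * R => normp (r i)).
Proof.
move=> r; rewrite (_ : (fun r => _) = fun r : 'I_N -> R * R => normp ((r i).1, (r i).2)).
  by apply: (@normp_continuous_at _ (fun r => (r i).1) (fun r => (r i).2));
    [exact: config_fst_continuous | exact: config_snd_continuous].
by apply: funext => s; rewrite -surjective_pairing.
Qed.

Lemma gmom_continuous : continuous (gmom m : ('I_N -> R * R) -> R).
Proof.
move=> r; apply: sum_continuous_at => i _; apply: continuousM; first exact: cst_continuous.
exact/sqr_continuous_at/normp_config_continuous.
Qed.

Lemma cohesion_continuous_at r : in_config r ->
  {for r, continuous (cohesion gamma m : ('I_N -> R * R) -> R)}.
Proof.
move=> r_config; apply: sum_continuous_at => i _; apply: sum_continuous_at => j ij.
apply: continuousM; first exact: cst_continuous.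
apply: continuousV; last exact: distp_config_continuous.
by rewrite gt_eqF // distp_gt0 //; apply: r_config; rewrite neq_ltn ij.
Qed.

Lemma exists_config_gmom1 : exists r, in_config r /\ gmom m r = 1.
Proof.
pose q : 'I_N -> R * R := fun i => ((i : nat)%:R, 0).
have q_config : in_config q.
  by move=> i j /eqP ij [/eqP]; rewrite eqr_nat => /eqP e; apply/ij/val_inj.
have q_gt0 := gmom_gt0 m_gt0 N_ge2 q_config.
exists (scale (Num.sqrt (gmom m q))^-1 q); split; last exact: gmom_normalize.
by apply: in_config_scale => //; rewrite invr_eq0 gt_eqF // sqrtr_gt0.
Qed.

Section Sublevel.
Variable r0 : 'I_N -> R * R.
Hypotheses (r0_config : in_config r0) (r0_gmom : gmom m r0 = 1).

Let margin (i j : 'I_N) : R := gamma * m i * m j / cohesion gamma m r0.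

Let sublevel : set ('I_N -> R * R) := gmom m @^-1` [set x | x = 1] `&`
  \bigcap_(i in [set: 'I_N]) \bigcap_(j in [set j : 'I_N | (i < j)%N])
    (fun r => distp (r i) (r j)) @^-1` [set x | margin i j <= x].

Let margin_gt0 i j : 0 < margin i j.
Proof. by rewrite divr_gt0 ?mulr_gt0 ?cohesion_gt0. Qed.

Lemma sublevel_in_config r : sublevel r -> in_config r.
Proof.
have dist_gt0 (i j : 'I_N) : (i < j)%N -> sublevel r -> r i <> r j.
  move=> ij [_ r_margin] rij.
  by have := lt_le_trans (margin_gt0 i j) (r_margin i I j ij); rewrite rij distpp ltxx.
move=> r_sub i j; rewrite neq_ltn => /orP[ij|ji]; first exact: dist_gt0.
by move=> rij; apply: (dist_gt0 j i ji r_sub).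
Qed.

Lemma cohesion_le_sublevel r : in_config r -> gmom m r = 1 ->
  cohesion gamma m r <= cohesion gamma m r0 -> sublevel r.
Proof.
move=> r_config r_gmom r_le; split=> // i _ j /= ij.
have d_gt0 : 0 < distp (r i) (r j).
  by apply: distp_gt0; apply: r_config; rewrite neq_ltn ij.
have := le_trans (pair_cohesion_le m_gt0 gamma_gt0 r ij) r_le.
by rewrite /pair_cohesion /margin ler_pdivrMr // ler_pdivrMr ?cohesion_gt0 //
  [distp _ _ * _]mulrC.
Qed.

Lemma sublevel_closed : closed sublevel.
Proof.
apply: closedI.
  by apply: preimage_closed; [move=> r _; exact: gmom_continuous | exact: closed_eq].
apply: closed_bigI => i _; apply: closed_bigI => j _.
by apply: preimage_closed; [move=> r _; exact: distp_config_continuous | exact: closed_ge].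
Qed.

Lemma sublevel_compact : compact sublevel.
Proof.
pose rad i := Num.sqrt (m i)^-1.
pose square i : set (R * R) := `[- rad i, rad i] `*` `[- rad i, rad i].
have box_compact : compact [set r : 'I_N -> R * R | forall i, square i (r i)].
  apply: (@tychonoff _ (fun=> (R * R)%type) square) => i.
  by apply: compact_setX; exact: segment_compact.
apply: subclosed_compact sublevel_closed box_compact _ => r [r_gmom _] i.
have := normp_le_gmom m_gt0 r i; rewrite r_gmom mul1r => r_rad.
by split; rewrite /= in_itv /= -ler_norml (le_trans _ r_rad)
  ?norm_fst_le_normp ?norm_snd_le_normp.
Qed.

Lemma exists_sublevel_minimizer :
  exists2 c, sublevel c & forall r, sublevel r -> cohesion gamma m c <= cohesion gamma m r.
Proof.
have sublevel_r0 : sublevel r0 by exact: cohesion_le_sublevel.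
have cohesion_cont : {within sublevel, continuous (cohesion gamma m)}.
  apply: continuous_in_subspaceT => r /set_mem /sublevel_in_config.
  exact: cohesion_continuous_at.
have [c /set_mem c_sub c_min] := compact_EVT_min (ex_intro _ r0 sublevel_r0)
  sublevel_compact cohesion_cont.
by exists c => // r r_sub; apply/c_min/mem_set.
Qed.

End Sublevel.

Lemma exists_sphere_minimizer : exists c, [/\ in_config c, gmom m c = 1 &
  forall r, in_config r -> gmom m r = 1 -> cohesion gamma m c <= cohesion gamma m r].
Proof.
have [r0 [r0_config r0_gmom]] := exists_config_gmom1.
have [c c_sub c_min] := exists_sublevel_minimizer r0_config r0_gmom.
exists c; split; [exact: sublevel_in_config c_sub | by case: c_sub |].
move=> r r_config r_gmom; have [r_le|r_gt] := leP (cohesion gamma m r) (cohesion gamma m r0).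
  by apply: c_min; exact: cohesion_le_sublevel.
apply: le_trans (ltW r_gt); apply: c_min; exact: cohesion_le_sublevel.
Qed.

End SphereMinimizer.

Section ScaleInvariantBound.
Variables (R : realType) (N : nat) (m : 'I_N -> R) (gamma : R).
Hypotheses (m_gt0 : forall i, 0 < m i) (gamma_gt0 : 0 < gamma) (N_ge2 : (2 <= N)%N).
Variable c : 'I_N -> R * R.
Hypotheses (c_config : in_config c) (c_gmom : gmom m c = 1).
Hypothesis c_min : forall r, in_config r -> gmom m r = 1 ->
  cohesion gamma m c <= cohesion gamma m r.
Let C := cohesion gamma m c.

Lemma sphere_min_le_cohesion_sqrt_gmom r :
  in_config r -> C <= cohesion gamma m r * Num.sqrt (gmom m r).
Proof.
move=> r_config; have g_gt0 := gmom_gt0 m_gt0 N_ge2 r_config.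
have a_gt0 : 0 < (Num.sqrt (gmom m r))^-1 by rewrite invr_gt0 sqrtr_gt0.
have := c_min (in_config_scale (lt0r_neq0 a_gt0) r_config) (gmom_normalize g_gt0).
by rewrite cohesion_scale // invrK.
Qed.

Lemma minimizer_cohesion lam rl : is_minimizer gamma m lam rl ->
  cohesion gamma m rl * Num.sqrt (gmom m rl) = C.
Proof.
move=> [rl_config rl_min]; set a := Num.sqrt (gmom m rl).
have a_gt0 : 0 < a by rewrite sqrtr_gt0 (gmom_gt0 m_gt0 N_ge2).
apply/eqP; rewrite eq_le sphere_min_le_cohesion_sqrt_gmom // andbT.
have := rl_min _ (in_config_scale (lt0r_neq0 a_gt0) c_config).
rewrite cohesion_scale // (gmom_scale m c (ltW a_gt0)) c_gmom mulr1 sqr_sqrtr ?gmom_ge0 //.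
by rewrite lerD2r ler_pdivlMr.
Qed.

Lemma rms_size_minimizer lam rl : is_minimizer gamma m lam rl ->
  rms_size m rl = C / (cohesion gamma m rl * Num.sqrt (total_mass m)).
Proof.
move=> rl_min; have f_gt0 := cohesion_gt0 m_gt0 gamma_gt0 N_ge2 rl_min.1.
have M_gt0 := total_mass_gt0 m_gt0 N_ge2.
rewrite -(minimizer_cohesion rl_min) rms_sizeE //; field.
by rewrite !lt0r_neq0 ?sqrtr_gt0.
Qed.

Lemma is_min_rms_size f0 : 0 < f0 ->
  is_min (fun x => exists r, in_config r /\ cohesion gamma m r = f0 /\ rms_size m r = x)
    (C / (f0 * Num.sqrt (total_mass m))).
Proof.
move=> f0_gt0; have M_gt0 := total_mass_gt0 m_gt0 N_ge2.
have C_gt0 : 0 < C := cohesion_gt0 m_gt0 gamma_gt0 N_ge2 c_config.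
have k_gt0 : 0 < C / f0 by rewrite divr_gt0.
split.
  exists (scale (C / f0) c); split; first exact: in_config_scale (lt0r_neq0 k_gt0) c_config.
  split; first by rewrite cohesion_scale // -/C invf_div mulrC divfK ?lt0r_neq0.
  rewrite rms_sizeE // (gmom_scale m c (ltW k_gt0)) c_gmom mulr1 sqrtr_sqr.
  by rewrite (ger0_norm (ltW k_gt0)) invfM mulrA.
move=> _ [r [r_config [r_f0 <-]]].
rewrite rms_sizeE // invfM mulrA ler_pM2r ?invr_gt0 ?sqrtr_gt0 // ler_pdivrMr //.
rewrite [_ * f0]mulrC -r_f0.
exact: sphere_min_le_cohesion_sqrt_gmom.
Qed.

End ScaleInvariantBound.

Theorem theorem4p3 (R : realType) (N : nat) (m : 'I_N -> R) (gamma : R) :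
  (2 <= N)%N -> (forall i, 0 < m i) -> 0 < gamma ->
  exists C : R,
    (* C = C(m) = min { f(r) : r in frak R, g(r) = 1 } *)
    is_min (fun x => exists r, in_config r /\ gmom m r = 1 /\ cohesion gamma m r = x) C /\
    (* min { b(r) : r in frak R, f(r) = f0 } = C / (f0 sqrt(sum m)) *)
    (forall f0 : R, 0 < f0 ->
       is_min (fun x => exists r, in_config r /\ cohesion gamma m r = f0 /\ rms_size m r = x)
              (C / (f0 * Num.sqrt (total_mass m)))) /\
    (* attained along every trajectory r_lambda(t) *)
    (forall lam : R, 0 < lam ->
     forall rl : 'I_N -> R * R, is_minimizer gamma m lam rl ->
     forall phi : 'I_N -> R, polar_angles rl phi ->
     forall t : R, 0 <= t ->
       rms_size m (traj rl phi (Num.sqrt (2 * lam)) t) =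
       C / (cohesion gamma m (traj rl phi (Num.sqrt (2 * lam)) t) * Num.sqrt (total_mass m))).
Proof.
move=> N_ge2 m_gt0 gamma_gt0.
have [c [c_config c_gmom c_min]] := exists_sphere_minimizer m_gt0 gamma_gt0 N_ge2.
exists (cohesion gamma m c); split; [split | split].
- by exists c.
- by move=> _ [r [r_config [r_gmom <-]]]; exact: c_min.
- exact: (is_min_rms_size m_gt0 gamma_gt0 N_ge2 c_config c_gmom c_min).
- move=> lam _ rl rl_min phi rl_polar t _.
  rewrite rms_size_traj cohesion_traj //.
  exact: (rms_size_minimizer m_gt0 gamma_gt0 N_ge2 c_config c_gmom c_min rl_min).
Qed.
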